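(* Let $I$ be an ideal in $P=\mathbb{Q}[x_1,\dots,x_n]$, let $\Delta(I)$ be its universal denominator, and let $p$ be a prime not dividing $\Delta(I)$. Then the ideal $I_{(p,\sigma)}\subseteq\mathbb{F}_p[x_1,\dots,x_n]$ does not depend on the term ordering $\sigma$ on $\mathbb{T}^n$.
   Context: $\mathbb{T}^n$ is the monoid of power-products in $x_1,\dots,x_n$. For $f\in P$, $\operatorname{den}(f)$ is the positive least common multiple of the denominators of the coefficients of $f$ (with $\operatorname{den}(0)=1$); for a set $F$, $\operatorname{den}(F)$ is the lcm of the $\operatorname{den}(f)$, $f\in F$. For a term ordering $\sigma$ with $G_\sigma$ the reduced $\sigma$-Gröbner basis of $I$, set $\operatorname{den}_\sigma(I)=\operatorname{den}(G_\sigma)$. Since an ideal has only finitely many distinct reduced Gröbner bases (finiteness of the Gröbner fan), the universal denominator $\Delta(I)$, defined as the least common multiple of all $\operatorname{den}_\sigma(I)$ as $\sigma$ ranges over all term orderings, is a well-defined positive integer. For a prime $p\nmid\operatorname{den}_\sigma(I)$, $\pi_p$ denotes coefficientwise reduction modulo $p$ and $I_{(p,\sigma)}$ is the ideal of $\mathbb{F}_p[x_1,\dots,x_n]$ generated by $\pi_p(G_\sigma)$. *)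

From HB Require Import structures.
From mathcomp Require Import all_boot all_order all_algebra.
From mathcomp Require Import mpoly.
Set Implicit Arguments. Unset Strict Implicit. Unset Printing Implicit Defensive.
Import Order.TTheory GRing.Theory Num.Theory.
Local Open Scope ring_scope.

Section GB.
Variable n : nat.

Definition term_order (le : rel 'X_{1..n}) : Prop :=
  [/\ reflexive le, antisymmetric le, transitive le & total le] /\
  (forall m1 m2 m, le m1 m2 -> le (m1 + m)%MM (m2 + m)%MM) /\
  (forall m, le 0%MM m).

(* Leading power-product of f w.r.t. le: the le-maximum of the support
   (irrelevant value 0 for f = 0). *)
Definition lm (R : nzRingType) (le : rel 'X_{1..n}) (f : {mpoly R[n]}) : 'X_{1..n} :=
  foldr (fun m acc => if le acc m then m else acc) 0%MM (msupp f).

Definition is_ideal (R : comNzRingType) (I : {mpoly R[n]} -> Prop) : Prop :=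
  [/\ I 0, (forall f g, I f -> I g -> I (f + g))
    & (forall h f, I f -> I (h * f))].

Definition ideal_gen (R : comNzRingType) (G : seq {mpoly R[n]}) (f : {mpoly R[n]}) : Prop :=
  exists c : 'I_(size G) -> {mpoly R[n]}, f = \sum_(i < size G) c i * G`_i.

(* G (a duplicate-free list representing a finite set) is the reduced
   le-Groebner basis of the ideal I. *)
Definition reduced_GB (R : comNzRingType) (le : rel 'X_{1..n})
    (I : {mpoly R[n]} -> Prop) (G : seq {mpoly R[n]}) : Prop :=
  [/\ uniq G,
      (forall f, I f <-> ideal_gen G f),
      (forall f, I f -> f != 0 -> exists2 g, g \in G & (lm le g <= lm le f)%MM),
      (forall g, g \in G -> g != 0 /\ g@_(lm le g) = 1)
    & (forall g g' m, g \in G -> g' \in G -> g != g' -> m \in msupp g ->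
          ~~ (lm le g' <= m)%MM)].

(* den(f): lcm of the denominators of the coefficients (den 0 = 1) *)
Definition den (f : {mpoly rat[n]}) : nat :=
  \big[lcmn/1%N]_(m <- msupp f) `|denq (f@_m)|%N.

Definition den_set (G : seq {mpoly rat[n]}) : nat :=
  \big[lcmn/1%N]_(g <- G) den g.

(* D is the universal denominator of I: the lcm of all den_sigma(I),
   characterized by its universal property. *)
Definition universal_denominator (I : {mpoly rat[n]} -> Prop) (D : nat) : Prop :=
  (forall le G, term_order le -> reduced_GB le I G -> (den_set G %| D)%N) /\
  (forall m : nat,
     (forall le G, term_order le -> reduced_GB le I G -> (den_set G %| m)%N) ->
     (D %| m)%N).

End GB.

Definition pi_p (p n : nat) (f : {mpoly rat[n]}) : {mpoly 'F_p[n]} :=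
  map_mpoly (fun q : rat => ratr q : 'F_p) f.

(* If p does not divide the universal denominator, every reduced Groebner
   basis G_sigma of I has its coefficients in the local ring Z_(p) and
   leading coefficients 1.  Hence division by G_sigma, which terminates
   because term orderings are well founded (Dickson's lemma), never leaves
   Z_(p)[x]: each element of I with coefficients in Z_(p), in particular each
   element of G_tau, is a Z_(p)[x]-combination of G_sigma.  Reduction modulo p
   is a ring morphism Z_(p) -> F_p, so pi_p(G_tau) lies in I_(p,sigma), and
   the reverse inclusion follows by symmetry. *)

From HB Require Import structures.
From mathcomp Require Import all_boot all_order all_algebra.
From mathcomp Require Import mpoly ring.
From Stdlib Require Import Classical.
Set Implicit Arguments. Unset Strict Implicit. Unset Printing Implicit Defensive.
Import Order.TTheory GRing.Theory Num.Theory.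
Local Open Scope ring_scope.

Section Dickson.
Variable n : nat.
Implicit Types (S : 'X_{1..n} -> Prop) (B : seq 'X_{1..n}).

Definition mnm_le_upto (k : nat) (m m' : 'X_{1..n}) : Prop :=
  forall i : 'I_n, (i < k)%N -> (m i <= m' i)%N.

Definition basis_upto (k : nat) S B : Prop :=
  (forall b, b \in B -> S b) /\
  forall s, S s -> exists2 b, b \in B & mnm_le_upto k b s.

Lemma basis_upto0 S : exists B, basis_upto 0 S B.
Proof.
have [[s Ss]|S0] := classic (exists s, S s).
  by exists [:: s]; split=> [b /[!inE]/eqP-> | t _] //; exists s; rewrite ?inE.
by exists [::]; split=> // s Ss; case: S0; exists s.
Qed.

Section Step.
Variables (k : nat) (lt_k_n : (k < n)%N).
Hypothesis basis_k : forall S, exists B, basis_upto k S B.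
Let i0 := Ordinal lt_k_n.

Lemma mnm_le_uptoS (m m' : 'X_{1..n}) :
  mnm_le_upto k m m' -> (m i0 <= m' i0)%N -> mnm_le_upto k.+1 m m'.
Proof.
move=> le_k le_i0 i; rewrite ltnS leq_eqVlt => /predU1P[ik|]; last exact: le_k.
by have -> : i = i0 by apply: val_inj.
Qed.

Lemma basis_upto_below (e : nat) S : exists B, (forall b, b \in B -> S b) /\
  forall s, S s -> (s i0 < e)%N -> exists2 b, b \in B & mnm_le_upto k.+1 b s.
Proof.
elim: e => [|e [B [BS B_le]]]; first by exists [::].
have [C [CS C_le]] := basis_k (fun s => S s /\ s i0 = e).
exists (B ++ C); split=> [b | s Ss].
  by rewrite mem_cat => /orP[/BS|/CS[]].
rewrite ltnS leq_eqVlt => /predU1P[se|/(B_le s Ss)[b Bb le_bs]]; last first.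
  by exists b; rewrite ?mem_cat ?Bb.
have [b Cb le_bs] := C_le s (conj Ss se).
exists b; first by rewrite mem_cat Cb orbT.
by apply: mnm_le_uptoS => //; have [_ ->] := CS b Cb; rewrite se.
Qed.

Lemma basis_uptoS S : exists B, basis_upto k.+1 S B.
Proof.
have [B0 [B0S B0_le]] := basis_k S.
pose e := (\max_(b <- B0) b i0).+1.
have [B1 [B1S B1_le]] := basis_upto_below e S.
exists (B0 ++ B1); split=> [b | s Ss].
  by rewrite mem_cat => /orP[/B0S|/B1S].
have [lt_se|le_es] := ltnP (s i0) e.
  have [b B1b le_bs] := B1_le s Ss lt_se.
  by exists b; rewrite ?mem_cat ?B1b ?orbT.
have [b B0b le_bs] := B0_le s Ss; exists b; first by rewrite mem_cat B0b.
apply: mnm_le_uptoS => //; apply: leq_trans (ltnW le_es).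
by rewrite (big_rem _ B0b) leq_maxl.
Qed.

End Step.

Lemma dickson S : exists B, (forall b, b \in B -> S b) /\
  forall s, S s -> exists2 b, b \in B & (b <= s)%MM.
Proof.
have basis k : (k <= n)%N -> forall S, exists B, basis_upto k S B.
  elim: k => [_|k IH lt_k_n]; first exact: basis_upto0.
  exact: basis_uptoS (IH (ltnW lt_k_n)).
have [B [BS B_le]] := basis n (leqnn n) S.
exists B; split=> // s /B_le[b Bb le_bs]; exists b => //.
by apply/mnm_lepP => i; apply: le_bs.
Qed.

End Dickson.

Lemma map_mpoly_eq0 (R S : nzRingType) n (f : {rmorphism R -> S})
    (p : {mpoly R[n]}) :
  injective f -> (map_mpoly f p == 0) = (p == 0).
Proof.
move=> f_inj; rewrite -!msupp_eq0 -!size_eq0.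
by rewrite (perm_size (msupp_map_mpoly p f_inj)).
Qed.

Section TermOrder.
Variables (n : nat) (le : rel 'X_{1..n}).
Hypothesis le_term : term_order le.

Let term_refl : reflexive le. Proof. by case: le_term => [[]]. Qed.
Let term_anti : antisymmetric le. Proof. by case: le_term => [[]]. Qed.
Let term_trans : transitive le. Proof. by case: le_term => [[]]. Qed.
Let term_total : total le. Proof. by case: le_term => [[]]. Qed.
Let term_addr m1 m2 m : le m1 m2 -> le (m1 + m)%MM (m2 + m)%MM.
Proof. by case: le_term => _ [+ _]; apply. Qed.
Let term_ge0 m : le 0%MM m. Proof. by case: le_term => _ []. Qed.

Lemma le_of_mnm_le (m1 m2 : 'X_{1..n}) : (m1 <= m2)%MM -> le m1 m2.
Proof.
move=> /submK <-.
by have := term_addr m1 (term_ge0 (m2 - m1)%MM); rewrite add0m addmC.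
Qed.

Lemma exists_min_seq (s : seq 'X_{1..n}) x : x \in s ->
  exists2 m, m \in s & forall y, y \in s -> le m y.
Proof.
move=> xs; have mem_s := mem_sort le s.
have := sort_sorted term_total s.
case: (sort le s) mem_s => [/(_ x)|m t mem_s /= path_t]; first by rewrite xs.
exists m; first by rewrite -mem_s mem_head.
move=> y; rewrite -mem_s inE => /predU1P[->|yt]; first exact: term_refl.
exact: (allP (order_path_min term_trans path_t)).
Qed.

Lemma exists_min (S : 'X_{1..n} -> Prop) s0 : S s0 ->
  exists2 m, S m & forall s, S s -> le m s.
Proof.
move=> Ss0; have [B [BS B_le]] := dickson S.
have [b0 Bb0 _] := B_le s0 Ss0; have [m Bm m_min] := exists_min_seq Bb0.
exists m => [|s /B_le[b Bb le_bs]]; first exact: BS.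
exact: term_trans (m_min b Bb) (le_of_mnm_le le_bs).
Qed.

Lemma term_order_wf : well_founded (fun m1 m2 => (m1 != m2) && le m1 m2).
Proof.
move=> m; apply: NNPP => not_acc.
have [m0 not_acc0 m0_min] := exists_min (S := fun m => ~ Acc _ m) not_acc.
apply: not_acc0; constructor => m' /andP[ne_m' le_m'].
apply: NNPP => /m0_min le_m0.
by move: ne_m'; rewrite (@term_anti m' m0) ?le_m' ?le_m0 ?eqxx.
Qed.

Lemma lm_max (R : nzRingType) (f : {mpoly R[n]}) m :
  m \in msupp f -> le m (lm le f).
Proof.
rewrite /lm; elim: (msupp f) => //= y s IH; set acc := foldr _ _ s.
rewrite inE => /predU1P[->|/IH le_m_acc]; case: ifP => le_acc //.
  by have /orP[] := term_total y acc; rewrite ?le_acc.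
exact: term_trans le_m_acc le_acc.
Qed.

Lemma lm_mem (R : nzRingType) (f : {mpoly R[n]}) :
  f != 0 -> lm le f \in msupp f.
Proof.
rewrite -msupp_eq0 /lm; elim: (msupp f) => //= y s IH _.
case: ifP => le_acc; first exact: mem_head.
case: s IH le_acc => [|z s] IH le_acc; first by rewrite term_ge0 in le_acc.
by rewrite inE IH ?orbT.
Qed.

Lemma lm_map_mpoly (R S : nzRingType) (f : {rmorphism R -> S})
    (p : {mpoly R[n]}) :
  injective f -> lm le (map_mpoly f p) = lm le p.
Proof.
move=> f_inj; have [->|p_nz] := eqVneq p 0; first by rewrite raddf0 /lm !msupp0.
have supp_f := perm_mem (msupp_map_mpoly p f_inj).
have fp_nz : map_mpoly f p != 0 by rewrite map_mpoly_eq0.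
apply: term_anti; rewrite !lm_max // ?supp_f ?lm_mem //.
by rewrite -supp_f lm_mem.
Qed.

Definition top_reduce (R : comNzRingType) (f g : {mpoly R[n]}) :
  {mpoly R[n]} :=
  f - (f@_(lm le f) *: 'X_[lm le f - lm le g]) * g.

Lemma top_reduce_lt (R : comNzRingType) (f g : {mpoly R[n]}) m :
  g@_(lm le g) = 1 -> (lm le g <= lm le f)%MM ->
  m \in msupp (top_reduce f g) -> (m != lm le f) && le m (lm le f).
Proof.
move=> g_monic /submK lm_f; rewrite /top_reduce.
set d := (lm le f - lm le g)%MM; set c := f@_(lm le f).
rewrite -scalerAl mulrC mcoeff_msupp mcoeffB mcoeffZ.
have [->|ne_m] := eqVneq m (lm le f).
  by rewrite -{2}lm_f mcoeffMX g_monic mulr1 subrr eqxx.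
have [fm0|fm_nz _] := eqVneq f@_m 0; last by rewrite lm_max // mcoeff_msupp.
rewrite fm0 sub0r oppr_eq0.
have [->|] := eqVneq (g * 'X_[d])@_m 0; first by rewrite mulr0 eqxx.
rewrite -mcoeff_msupp (perm_mem (msuppMX g d)) => /mapP[m' m'_supp ->] _.
by rewrite -lm_f addmC [(d + _)%MM]addmC term_addr // lm_max.
Qed.

End TermOrder.

Section IdealGen.
Variables (n : nat) (R : comNzRingType) (G : seq {mpoly R[n]}).

Lemma ideal_gen0 : ideal_gen G 0.
Proof. by exists (fun=> 0); rewrite big1 // => i _; rewrite mul0r. Qed.

Lemma ideal_genD f g : ideal_gen G f -> ideal_gen G g -> ideal_gen G (f + g).
Proof.
move=> [c ->] [c' ->]; exists (fun i => c i + c' i).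
by rewrite -big_split; apply: eq_bigr => i _; rewrite mulrDl.
Qed.

Lemma ideal_genM h f : ideal_gen G f -> ideal_gen G (h * f).
Proof.
move=> [c ->]; exists (fun i => h * c i).
by rewrite mulr_sumr; apply: eq_bigr => i _; rewrite mulrA.
Qed.

Lemma ideal_gen_mem g : g \in G -> ideal_gen G g.
Proof.
move=> Gg; have lt_gG : (index g G < size G)%N by rewrite index_mem.
exists (fun i => (i == Ordinal lt_gG)%:R).
rewrite (bigD1 (Ordinal lt_gG)) //= eqxx mul1r nth_index // big1 ?addr0 //.
by move=> i /negbTE->; rewrite mul0r.
Qed.

Lemma ideal_gen_sub (H : seq {mpoly R[n]}) :
  (forall g, g \in H -> ideal_gen G g) ->
  forall f, ideal_gen H f -> ideal_gen G f.
Proof.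
move=> HG _ [c ->]; apply: big_ind => [|u v|i _]; first exact: ideal_gen0.
  exact: ideal_genD.
by apply/ideal_genM/HG/mem_nth.
Qed.

End IdealGen.

Lemma ideal_gen_rmorph n (R S : comNzRingType)
    (h : {rmorphism {mpoly R[n]} -> {mpoly S[n]}}) (G : seq {mpoly R[n]}) f :
  ideal_gen G f -> ideal_gen (map h G) (h f).
Proof.
move=> [c ->]; rewrite rmorph_sum; apply: big_ind => [|u v|i _].
- exact: ideal_gen0.
- exact: ideal_genD.
by rewrite rmorphM; apply/ideal_genM/ideal_gen_mem/map_f/mem_nth.
Qed.

Section MonicBasis.
Variables (n : nat) (le : rel 'X_{1..n}).

Definition monic_GB (R : comNzRingType) (J : {mpoly R[n]} -> Prop)
    (G : seq {mpoly R[n]}) : Prop :=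
  [/\ forall g, g \in G -> J g,
      forall g, g \in G -> g@_(lm le g) = 1
    & forall f, J f -> f != 0 -> exists2 g, g \in G & (lm le g <= lm le f)%MM].

Lemma reduced_GB_monic (R : comNzRingType) (I : {mpoly R[n]} -> Prop) G :
  reduced_GB le I G -> monic_GB I G.
Proof.
case=> _ IG G_lead G_monic _; split=> // g Gg; first exact/IG/ideal_gen_mem.
by case: (G_monic g Gg).
Qed.

Hypothesis le_term : term_order le.

Lemma monic_GB_ideal_gen (R : comNzRingType) (J : {mpoly R[n]} -> Prop) G :
  is_ideal J -> monic_GB J G -> forall f, J f -> ideal_gen G f.
Proof.
move=> [_ J_add J_mul] [GJ G_monic G_lead].
suff: forall m f, lm le f = m -> J f -> ideal_gen G f by move=> + f; apply.
elim/(well_founded_ind (term_order_wf le_term)) => m IH f lm_f Jf.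
have [->|f_nz] := eqVneq f 0; first exact: ideal_gen0.
have [g Gg lm_g] := G_lead f Jf f_nz.
have J_red : J (top_reduce le f g).
  by rewrite /top_reduce -mulNr; apply/J_add/J_mul/GJ.
have gen_red : ideal_gen G (top_reduce le f g).
  have [->|red_nz] := eqVneq (top_reduce le f g) 0; first exact: ideal_gen0.
  apply: IH J_red => //; rewrite -lm_f.
  exact: (top_reduce_lt le_term (G_monic g Gg) lm_g (lm_mem le_term red_nz)).
have -> : f = top_reduce le f g
               + (f@_(lm le f) *: 'X_[lm le f - lm le g]) * g by rewrite subrK.
exact/ideal_genD/ideal_genM/ideal_gen_mem.
Qed.

Lemma monic_GB_preimage (R S : comNzRingType) (f : {rmorphism R -> S})
    (J : {mpoly S[n]} -> Prop) G :
  injective f -> monic_GB J (map (map_mpoly f) G) ->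
  monic_GB (fun p => J (map_mpoly f p)) G.
Proof.
move=> f_inj [GJ G_monic G_lead]; have lm_f := lm_map_mpoly le_term _ f_inj.
split=> [g Gg | g Gg | p Jp p_nz]; first exact/GJ/map_f.
  by apply: f_inj; rewrite rmorph1 -mcoeff_map_mpoly -lm_f; apply/G_monic/map_f.
have fp_nz : map_mpoly f p != 0 by rewrite map_mpoly_eq0.
have [_ /mapP[g Gg ->] lm_g] := G_lead _ Jp fp_nz.
by exists g; rewrite // -lm_f -(lm_f p).
Qed.

End MonicBasis.

Lemma is_ideal_preimage n (R S : comNzRingType)
    (h : {rmorphism {mpoly R[n]} -> {mpoly S[n]}}) (I : {mpoly S[n]} -> Prop) :
  is_ideal I -> is_ideal (fun p => I (h p)).
Proof.
by case=> I0 I_add I_mul; split=> [|p q Ip Iq|u p Ip] /=;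
  rewrite ?rmorph0 ?rmorphD ?rmorphM; auto.
Qed.

Section IntegralRationals.
Variable F : fieldType.

(* For F = 'F_p this is the local ring Z_(p). *)
Definition F_integral : {pred rat} := fun q => (denq q)%:~R != 0 :> F.

Lemma F_integral_frac (q : rat) (x y : int) :
  q * y%:~R = x%:~R -> y%:~R != 0 :> F ->
  q \in F_integral /\ ratr q = x%:~R / y%:~R :> F.
Proof.
move=> def_q y_nz.
have eZ : numq q * y = x * denq q.
  by apply: (@intr_inj rat); rewrite !rmorphM /= numqE -def_q; ring.
have eF : (numq q)%:~R * y%:~R = x%:~R * (denq q)%:~R :> F.
  by rewrite -!intrM eZ.
have q_int : q \in F_integral.
  apply: contraTT isT; rewrite negbK => /eqP den0.
  move: eF; rewrite den0 mulr0 => /eqP; rewrite mulf_eq0 (negbTE y_nz) orbF.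
  move=> /eqP num0.
  (* a Bezout relation between numq q and denq q forbids both to vanish in F *)
  have /coprimezP [[u v] /= uv1] : coprimez (numq q) (denq q).
    by rewrite coprimezE coprime_num_den.
  have /eqP := congr1 (intr : int -> F) uv1.
  by rewrite rmorphD !rmorphM /= num0 den0 !mulr0 addr0 eq_sym oner_eq0.
split=> //; apply: (@mulIf _ ((denq q)%:~R * y%:~R)).
  by rewrite mulf_neq0.
by rewrite /ratr !mulrA mulfVK // mulrAC mulfVK // eF.
Qed.

Lemma F_integralB a b : a \in F_integral -> b \in F_integral ->
  a - b \in F_integral /\ ratr (a - b) = ratr a - ratr b :> F.
Proof.
move=> a_int b_int.
have [||-> ->] := @F_integral_frac (a - b) (numq a * denq b - numq b * denq a)
                                   (denq a * denq b).
- by rewrite rmorphB !rmorphM /= !numqE; ring.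
- by rewrite rmorphM mulf_neq0.
by split=> //; rewrite /ratr rmorphB !rmorphM /=; field; apply/andP.
Qed.

Lemma F_integralM a b : a \in F_integral -> b \in F_integral ->
  a * b \in F_integral /\ ratr (a * b) = ratr a * ratr b :> F.
Proof.
move=> a_int b_int.
have [||-> ->] := @F_integral_frac (a * b) (numq a * numq b) (denq a * denq b).
- by rewrite !rmorphM /= !numqE; ring.
- by rewrite rmorphM mulf_neq0.
by split=> //; rewrite /ratr !rmorphM /=; field; apply/andP.
Qed.

Lemma F_integral_subring_closed : subring_closed F_integral.
Proof.
split; first by rewrite unfold_in /= (denq_int 1) oner_eq0.
- by move=> a b /F_integralB h /h[].
- by move=> a b /F_integralM h /h[].
Qed.

HB.instance Definition _ :=
  GRing.isSubringClosed.Build rat F_integral F_integral_subring_closed.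

Record integral_rat :=
  IntegralRat { irval : rat; irvalP : irval \in F_integral }.

HB.instance Definition _ := [isSub for irval].
HB.instance Definition _ := [Choice of integral_rat by <:].
HB.instance Definition _ := [SubChoice_isSubComNzRing of integral_rat by <:].

Definition reduce_integral (x : integral_rat) : F := ratr (val x).

Lemma reduce_integral_is_zmod_morphism : zmod_morphism reduce_integral.
Proof. by move=> x y; case: (F_integralB (valP x) (valP y)). Qed.

Lemma reduce_integral_is_monoid_morphism : monoid_morphism reduce_integral.
Proof.
split=> [|x y]; last by case: (F_integralM (valP x) (valP y)).
by rewrite /reduce_integral /ratr (numq_int 1) (denq_int 1) divr1.
Qed.

HB.instance Definition _ := GRing.isZmodMorphism.Build integral_rat F
  reduce_integral reduce_integral_is_zmod_morphism.
HB.instance Definition _ := GRing.isMonoidMorphism.Build integral_rat F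
  reduce_integral reduce_integral_is_monoid_morphism.

End IntegralRationals.

Lemma F_integral_Fp (p : nat) (q : rat) :
  prime p -> ~~ (p %| `|denq q|)%N -> q \in F_integral 'F_p.
Proof.
move=> p_pr p_ndvd; rewrite unfold_in /= -absz_denq.
by rewrite -(dvdn_pcharf (pchar_Fp p_pr)).
Qed.

Lemma map_mpoly_comp_inj (R S T : nzRingType) n (f : {rmorphism R -> S})
    (g : S -> T) (p : {mpoly R[n]}) :
  injective f -> map_mpoly (g \o f) p = map_mpoly g (map_mpoly f p).
Proof.
move=> f_inj; rewrite [RHS]/map_mpoly /mmap.
rewrite (perm_big _ (msupp_map_mpoly p f_inj)).
by apply: eq_bigr => m _; rewrite mcoeff_map_mpoly.
Qed.

Section Lifting.
Variables (F : fieldType) (n : nat).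

Definition mpoly_lift (f : {mpoly rat[n]}) : {mpoly (integral_rat F)[n]} :=
  \sum_(m <- msupp f) insubd 0 f@_m *: 'X_[m].

Lemma mpoly_liftK f :
  f \is a mpolyOver n (F_integral F) -> map_mpoly val (mpoly_lift f) = f.
Proof.
move=> /mpolyOverP f_int; rewrite raddf_sum [RHS]mpolyE.
apply: eq_bigr => m _; apply: etrans (map_mpolyZ _ _ _) _.
by rewrite map_mpolyX; congr (_ *: _); apply: insubdK.
Qed.

Lemma ratr_mpoly_lift f : f \is a mpolyOver n (F_integral F) ->
  map_mpoly (fun q : rat => ratr q : F) f
  = map_mpoly (@reduce_integral F) (mpoly_lift f).
Proof.
move=> f_int; rewrite -{1}(mpoly_liftK f_int) -map_mpoly_comp_inj //.
exact: val_inj.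
Qed.

End Lifting.

Lemma ratr_ideal_gen_GB (F : fieldType) n (le : rel 'X_{1..n})
    (I : {mpoly rat[n]} -> Prop) (G : seq {mpoly rat[n]}) g :
  term_order le -> is_ideal I -> reduced_GB le I G ->
  (forall h, h \in G -> h \is a mpolyOver n (F_integral F)) ->
  I g -> g \is a mpolyOver n (F_integral F) ->
  ideal_gen (map (map_mpoly (fun q : rat => ratr q : F)) G)
            (map_mpoly (fun q : rat => ratr q : F) g).
Proof.
move=> le_term I_ideal G_GB G_int Ig g_int.
pose G' := map (@mpoly_lift F n) G.
have G'_lift : map (map_mpoly val) G' = G.
  by rewrite -map_comp; apply: map_id_in => h /G_int/mpoly_liftK.
have G'_GB : monic_GB le (fun p => I (map_mpoly val p)) G'.
  apply: monic_GB_preimage val_inj _ => //.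
  by rewrite G'_lift; apply: reduced_GB_monic.
have ratr_G : map (map_mpoly (fun q : rat => ratr q : F)) G
              = map (map_mpoly (@reduce_integral F)) G'.
  by rewrite -map_comp; apply/eq_in_map => h /G_int/ratr_mpoly_lift.
rewrite ratr_G ratr_mpoly_lift //; apply: ideal_gen_rmorph.
apply: (monic_GB_ideal_gen le_term (is_ideal_preimage _ I_ideal) G'_GB).
by rewrite /= mpoly_liftK.
Qed.

Lemma den_set_mpolyOver (p n : nat) (G : seq {mpoly rat[n]}) :
  prime p -> ~~ (p %| den_set G)%N ->
  forall g, g \in G -> g \is a mpolyOver n (F_integral 'F_p).
Proof.
move=> p_pr p_ndvd g Gg; apply/mpolyOverP => m.
have [m_supp|] := boolP (m \in msupp g); last first.
  by rewrite mcoeff_msupp negbK => /eqP->; apply: rpred0.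
apply: F_integral_Fp => //; apply: contra p_ndvd => /dvdn_trans; apply.
rewrite /den_set (big_rem _ Gg) /=; apply: dvdn_trans (dvdn_lcml _ _).
by rewrite /den (big_rem _ m_supp) dvdn_lcml.
Qed.

Lemma pi_p_reduced_GB_sub (p n : nat) (I : {mpoly rat[n]} -> Prop)
    (le le' : rel 'X_{1..n}) (G G' : seq {mpoly rat[n]}) :
  prime p -> is_ideal I -> term_order le ->
  reduced_GB le I G -> reduced_GB le' I G' ->
  ~~ (p %| den_set G)%N -> ~~ (p %| den_set G')%N ->
  forall f, ideal_gen (map (@pi_p p n) G') f -> ideal_gen (map (@pi_p p n) G) f.
Proof.
move=> p_pr I_ideal le_term G_GB G'_GB p_ndvd p_ndvd'.
apply: ideal_gen_sub => _ /mapP[g G'g ->].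
have G_int := den_set_mpolyOver p_pr p_ndvd.
apply: ratr_ideal_gen_GB le_term I_ideal G_GB G_int _ _.
  by case: G'_GB => _ IG' _ _ _; apply/IG'/ideal_gen_mem.
exact: den_set_mpolyOver p_pr p_ndvd' g G'g.
Qed.

Theorem proposition2p14 (n : nat) (I : {mpoly rat[n]} -> Prop) (D p : nat) :
  is_ideal I -> universal_denominator I D -> prime p -> ~~ (p %| D)%N ->
  forall (le1 le2 : rel 'X_{1..n}) (G1 G2 : seq {mpoly rat[n]}),
    term_order le1 -> term_order le2 ->
    reduced_GB le1 I G1 -> reduced_GB le2 I G2 ->
    forall f : {mpoly 'F_p[n]},
      ideal_gen (map (@pi_p p n) G1) f <-> ideal_gen (map (@pi_p p n) G2) f.
Proof.
move=> I_ideal [den_dvd _] p_pr p_ndvd le1 le2 G1 G2 le1_term le2_term.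
move=> G1_GB G2_GB f.
have p_ndvd_den le G :
    term_order le -> reduced_GB le I G -> ~~ (p %| den_set G)%N.
  move=> le_term G_GB; apply: contra p_ndvd => /dvdn_trans; apply.
  exact: den_dvd G_GB.
have p_ndvd1 := p_ndvd_den _ _ le1_term G1_GB.
have p_ndvd2 := p_ndvd_den _ _ le2_term G2_GB.
have incl := pi_p_reduced_GB_sub p_pr I_ideal.
split; first exact: incl le2_term G2_GB G1_GB p_ndvd2 p_ndvd1 f.
exact: incl le1_term G1_GB G2_GB p_ndvd1 p_ndvd2 f.
Qed.
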